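(* Let $\mathbb{F}\in\{\mathbb{R},\mathbb{C}\}$. If $S\in\mathsf{GL}_m(\mathbb{F})$ and $T\in\mathsf{GL}_n(\mathbb{F})$ are Perron similarities, then $S\otimes T$ is a Perron similarity.
   Context: An invertible matrix $S\in\mathsf{GL}_n(\mathbb{F})$ is called a Perron similarity if there is an index $i\in\{1,\ldots,n\}$ such that the column $Se_i$ and the row $e_i^\top S^{-1}$ are both entrywise nonnegative (real) or both entrywise nonpositive (real); here $e_i$ is the $i$-th standard basis vector. $\otimes$ denotes the Kronecker product, $A\otimes B=[a_{ij}B]$ blockwise. *)

From HB Require Import structures.
From mathcomp Require Import all_boot all_order all_algebra.
From mathcomp Require Export mxtens complex.
Set Implicit Arguments. Unset Strict Implicit. Unset Printing Implicit Defensive.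
Import Order.TTheory GRing.Theory Num.Theory.
Local Open Scope ring_scope.

(* In a numFieldType such as complex R,
   [0 <= x] means x is real and nonnegative. *)
Definition perron_similarity (F : numFieldType) (n : nat) (S : 'M[F]_n) : Prop :=
  S \in unitmx /\
  exists i : 'I_n,
    (forall k : 'I_n, 0 <= S k i /\ 0 <= invmx S i k) \/
    (forall k : 'I_n, S k i <= 0 /\ invmx S i k <= 0).

From HB Require Import structures.
From mathcomp Require Import all_boot all_order all_algebra.
From mathcomp Require Import mxtens complex reals.
Import Order.TTheory GRing.Theory Num.Theory.
Local Open Scope ring_scope.

(* The Kronecker product is multiplicative and [invmx (S *t T) = invmx S *t invmx T],
   so column [(i, j)] of [S *t T] and row [(i, j)] of its inverse are the entrywise
   products of the Perron column and row of [S] with those of [T]; products of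
   entries of equal sign are nonnegative, of opposite sign nonpositive. *)

Lemma tensmx1 (R : pzRingType) m n :
  (1%:M : 'M[R]_m) *t (1%:M : 'M[R]_n) = 1%:M.
Proof.
apply/matrixP=> i j.
case: (mxtens_indexP i) => a b; case: (mxtens_indexP j) => c d.
rewrite tensmxE !mxE -natrM mulnb.
by rewrite (inj_eq (can_inj (@mxtens_indexK _ _))) xpair_eqE.
Qed.

Section TensInverse.

Variables (R : comUnitRingType) (m n : nat) (S : 'M[R]_m) (T : 'M[R]_n).
Hypotheses (uS : S \in unitmx) (uT : T \in unitmx).

Lemma mulVmx_tens : (invmx S *t invmx T) *m (S *t T) = 1%:M.
Proof. by rewrite tensmx_mul !mulVmx // tensmx1. Qed.

Lemma unitmx_tens : S *t T \in unitmx.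
Proof. by have [] := mulmx1_unit mulVmx_tens. Qed.

Lemma invmx_tens : invmx (S *t T) = invmx S *t invmx T.
Proof.
by rewrite -[LHS]mul1mx -mulVmx_tens -mulmxA mulmxV ?mulmx1 // unitmx_tens.
Qed.

End TensInverse.

Lemma perron_similarity_tens (F : numFieldType) m n (S : 'M[F]_m) (T : 'M[F]_n) :
  perron_similarity S -> perron_similarity T -> perron_similarity (S *t T).
Proof.
move=> [uS [i HS]] [uT [j HT]]; split; first exact: unitmx_tens.
exists (mxtens_index (i, j)); rewrite invmx_tens //.
have tens_index k : exists a b, k = @mxtens_index m n (a, b).
  by case: (mxtens_indexP k) => a b; exists a, b.
case: HS => HS; case: HT => HT; [left|right|right|left] => k;
  have [a [b ->]] := tens_index k; rewrite !tensmxE;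
  have [Sai iSa] := HS a; have [Tbj iTb] := HT b.
- by rewrite !mulr_ge0.
- by rewrite !mulr_ge0_le0.
- by rewrite !mulr_le0_ge0.
- by rewrite !mulr_le0.
Qed.

Theorem theorem4p2 :
  (forall (R : realType) (m n : nat) (S : 'M[R]_m) (T : 'M[R]_n),
      perron_similarity S -> perron_similarity T ->
      perron_similarity (S *t T)) /\
  (forall (R : realType) (m n : nat) (S : 'M[R[i]]_m) (T : 'M[R[i]]_n),
      perron_similarity S -> perron_similarity T ->
      perron_similarity (S *t T)).
Proof. by split=> R m n S T; apply: perron_similarity_tens. Qed.
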